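(* Under the standing assumptions below, Problem (BP) and Problem (OP) are equivalent in the following sense. (a) If $\bar z$ is an optimal solution of (OP) and $(\bar x,\bar y)$ is an optimal solution of the problem $MP(\bar z)$ defining $\varphi(\bar z)$, then $(\bar x,\bar y)$ is an optimal solution of (BP). (b) Conversely, if $(\bar x,\bar y)$ is an optimal solution of (BP), then $\bar z=f(\bar x)$ is an optimal solution of (OP), and $\varphi(f(\bar x))=h(\bar x,\bar y)$. In particular, the optimal values of (BP) and (OP) coincide.
   Context: Standing assumptions: $X=\{x\in\mathbb{R}^n\mid s(x)\le 0\}$ is nonempty, bounded and convex, where $s:\mathbb{R}^n\to\mathbb{R}^q$ is continuously differentiable with quasiconvex components. $f=(f_1,\dots,f_p):\mathbb{R}^n\to\mathbb{R}^p$ is continuously differentiable with each $f_i$ pseudoconvex; $g:\mathbb{R}^n\times\mathbb{R}^m\to\mathbb{R}^\ell$ is continuously differentiable with quasiconvex components; $h:\mathbb{R}^n\times\mathbb{R}^m\to\mathbb{R}$ is continuous and pseudoconvex. (A differentiable $G$ is pseudoconvex if $\nabla G(x)^\top(\tilde x-x)\ge 0\Rightarrow G(\tilde x)\ge G(x)$; quasiconvex if $G(\lambda x+(1-\lambda)\tilde x)\le\max\{G(x),G(\tilde x)\}$ for $\lambda\in[0,1]$.) For $a,b\in\mathbb{R}^p$, $a\le b$ means $a_i\le b_i$ for all $i$ and $a<b$ means $a_i<b_i$ for all $i$. For $Q\subset\mathbb{R}^p$, ${\rm WMin}\,Q$ is the set of $q\in Q$ such that there is no $q'\in Q$ with $q'<q$.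 $X_{WE}$ denotes the set of $x\in X$ such that there is no $x'\in X$ with $f(x')<f(x)$ (weakly efficient solutions of $\min\{f(x)\mid x\in X\}$). Problem (BP): minimize $h(x,y)$ subject to $g(x,y)\le 0$, $y\in\mathbb{R}^m_+$, $x\in X_{WE}$. Let $\mathcal{G}=\{(x,y)\mid x\in X,\ y\in\mathbb{R}^m_+,\ g(x,y)\le 0\}$, $\mathcal{Z}=\{f(x)\mid x\in X\}$, $\mathcal{Z}^+=\mathcal{Z}+\mathbb{R}^p_+$, let $M\in\mathbb{R}^p$ satisfy $f(x)\le M$ for all $x\in X$, and $\mathcal{Z}^\diamond=\mathcal{Z}^+\cap(M-\mathbb{R}^p_+)$. For $z\in\mathcal{Z}^\diamond$, $MP(z)$ is the problem $\min\{h(x,y)\mid (x,y)\in\mathcal{G},\ f(x)\le z\}$ and $\varphi(z)$ is its optimal value. Problem (OP): minimize $\varphi(z)$ subject to $z\in{\rm WMin}\,\mathcal{Z}^\diamond$. *)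

From HB Require Import structures.
From mathcomp Require Import all_boot all_order all_algebra.
From mathcomp Require Import all_classical all_reals all_analysis.
Set Implicit Arguments. Unset Strict Implicit. Unset Printing Implicit Defensive.
Import Order.TTheory GRing.Theory Num.Theory.
Import numFieldNormedType.Exports.
Local Open Scope classical_set_scope.
Local Open Scope ring_scope.

Section Defs.
Variable R : realType.

Definition vle p (a b : 'rV[R]_p) : Prop := forall i : 'I_p, a ord0 i <= b ord0 i.
Definition vlt p (a b : 'rV[R]_p) : Prop := forall i : 'I_p, a ord0 i < b ord0 i.

Definition WMin p (Q : set 'rV[R]_p) : set 'rV[R]_p :=
  [set q | Q q /\ ~ (exists q', Q q' /\ vlt q' q)].

Definition cont_diff (V W : normedModType R) (F : V -> W) : Prop :=
  (forall x, differentiable F x) /\ (forall v : V, continuous (fun x => 'd F x v)).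

Definition pseudoconvex (V : normedModType R) (G : V -> R) : Prop :=
  (forall x, differentiable G x) /\
  (forall x x' : V, 0 <= 'd G x (x' - x) -> G x <= G x').

Definition quasiconvex (V : normedModType R) (G : V -> R) : Prop :=
  forall (x x' : V) (l : R), 0 <= l <= 1 ->
    G (l *: x + (1 - l) *: x') <= Num.max (G x) (G x').

Definition vcomp p (V : Type) (F : V -> 'rV[R]_p) (i : 'I_p) : V -> R :=
  fun v => F v ord0 i.

Variables (n m p q l : nat).
Variable s : 'rV[R]_n -> 'rV[R]_q.
Variable f : 'rV[R]_n -> 'rV[R]_p.
Variable g : 'rV[R]_n -> 'rV[R]_m -> 'rV[R]_l.
Variable h : 'rV[R]_n -> 'rV[R]_m -> R.
Variable M : 'rV[R]_p.

Definition Xset : set 'rV[R]_n := [set x | vle (s x) 0].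

Definition XWE : set 'rV[R]_n :=
  [set x | Xset x /\ ~ (exists x', Xset x' /\ vlt (f x') (f x))].

Definition BPfeas : set ('rV[R]_n * 'rV[R]_m) :=
  [set xy | vle (g xy.1 xy.2) 0 /\ vle 0 xy.2 /\ XWE xy.1].

Definition BPopt (xy : 'rV[R]_n * 'rV[R]_m) : Prop :=
  BPfeas xy /\ forall xy', BPfeas xy' -> h xy.1 xy.2 <= h xy'.1 xy'.2.

(* optimal value of (BP) (extended real, +oo if infeasible) *)
Definition BPval : \bar R := ereal_inf [set (h xy.1 xy.2)%:E | xy in BPfeas].

Definition Gset : set ('rV[R]_n * 'rV[R]_m) :=
  [set xy | Xset xy.1 /\ vle 0 xy.2 /\ vle (g xy.1 xy.2) 0].

Definition Zset : set 'rV[R]_p := f @` Xset.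
Definition Zplus : set 'rV[R]_p :=
  [set z | exists2 z0, Zset z0 & exists2 d, vle 0 d & z = z0 + d].
Definition Zdiam : set 'rV[R]_p :=
  [set z | Zplus z /\ exists2 d, vle 0 d & z = M - d].

Definition MPfeas (z : 'rV[R]_p) : set ('rV[R]_n * 'rV[R]_m) :=
  [set xy | Gset xy /\ vle (f xy.1) z].

Definition MPopt (z : 'rV[R]_p) (xy : 'rV[R]_n * 'rV[R]_m) : Prop :=
  MPfeas z xy /\ forall xy', MPfeas z xy' -> h xy.1 xy.2 <= h xy'.1 xy'.2.

Definition phi (z : 'rV[R]_p) : \bar R :=
  ereal_inf [set (h xy.1 xy.2)%:E | xy in MPfeas z].

Definition OPopt (z : 'rV[R]_p) : Prop :=
  WMin Zdiam z /\ forall z', WMin Zdiam z' -> (phi z <= phi z')%E.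

Definition OPval : \bar R := ereal_inf [set phi z | z in WMin Zdiam].

End Defs.

From HB Require Import structures.
From mathcomp Require Import all_boot all_order all_algebra.
From mathcomp Require Import all_classical all_reals all_analysis.
Import Order.TTheory GRing.Theory Num.Theory.
Import numFieldNormedType.Exports.
Local Open Scope classical_set_scope.
Local Open Scope ring_scope.

Set Implicit Arguments.
Unset Strict Implicit.
Unset Printing Implicit Defensive.

(* The argument is purely order-theoretic; the only analytic hypothesis it
   uses is that M bounds f on X. *)

Section Vector_order.
Variables (R : realType) (p : nat).
Implicit Types a b c : 'rV[R]_p.

Lemma vlt_le_trans a b c : vlt a b -> vle b c -> vlt a c.
Proof. by move=> ab bc i; exact: lt_le_trans (ab i) (bc i). Qed.

Lemma vle_lt_trans a b c : vle a b -> vlt b c -> vlt a c.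
Proof. by move=> ab bc i; exact: le_lt_trans (ab i) (bc i). Qed.

Lemma vle_addr a d : vle 0 d -> vle a (a + d).
Proof. by move=> d_ge0 i; rewrite mxE lerDl; have := d_ge0 i; rewrite mxE. Qed.

End Vector_order.

Section BP_OP.
Variables (R : realType) (n m p q l : nat).
Variables (s : 'rV[R]_n -> 'rV[R]_q) (f : 'rV[R]_n -> 'rV[R]_p).
Variables (g : 'rV[R]_n -> 'rV[R]_m -> 'rV[R]_l) (h : 'rV[R]_n -> 'rV[R]_m -> R).
Variable M : 'rV[R]_p.
Hypothesis f_le_M : forall x, Xset s x -> vle (f x) M.

Local Notation WMinZ := (WMin (Zdiam s f M)).

Lemma Zdiam_image x : Xset s x -> Zdiam s f M (f x).
Proof.
move=> Xx; split.
  exists (f x); first by exists x.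
  by exists 0; [move=> i; rewrite mxE | rewrite addr0].
exists (M - f x); last by rewrite opprB addrC subrK.
by move=> i; rewrite !mxE subr_ge0; exact: f_le_M.
Qed.

Lemma WMin_dominated_XWE z x :
  WMinZ z -> Xset s x -> vle (f x) z -> XWE s f x.
Proof.
move=> [_ z_min] Xx fx_le_z; split=> // -[x' [Xx' fx'_lt]].
apply: z_min; exists (f x'); split; first exact: Zdiam_image.
exact: vlt_le_trans fx'_lt fx_le_z.
Qed.

(* f maps weakly efficient points onto weakly minimal points of Z^diamond:
   anything strictly below f(x) in Z^diamond lies above some f(x0). *)
Lemma XWE_WMin x : XWE s f x -> WMinZ (f x).
Proof.
move=> [Xx x_eff]; split; first exact: Zdiam_image.
move=> [_ [[[_ [x0 Xx0 <-] [d d_ge0 ->]] _] lt_fx]].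
apply: x_eff; exists x0; split=> //.
exact: vle_lt_trans (vle_addr _ d_ge0) lt_fx.
Qed.

Lemma MPfeas_BPfeas z xy : WMinZ z -> MPfeas s f g z xy -> BPfeas s f g xy.
Proof.
move: xy => [x y] z_min [[Xx [y_ge0 g_le0]] fx_le_z] /=.
by split=> //; split=> //; exact: WMin_dominated_XWE z_min Xx fx_le_z.
Qed.

Lemma BPfeas_MPfeas xy : BPfeas s f g xy -> MPfeas s f g (f xy.1) xy.
Proof. by move: xy => [x y] [g_le0 [y_ge0 [Xx _]]]; split. Qed.

Lemma BPfeas_WMin xy : BPfeas s f g xy -> WMinZ (f xy.1).
Proof. by move=> [_ [_ x_we]]; exact: XWE_WMin. Qed.

Lemma phi_le_feas z xy : MPfeas s f g z xy -> (phi s f g h z <= (h xy.1 xy.2)%:E)%E.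
Proof. by move=> feas; apply: ereal_inf_lbound; exists xy. Qed.

Lemma phi_ge_lbound z (a : R) :
  (forall xy, MPfeas s f g z xy -> a <= h xy.1 xy.2) -> (a%:E <= phi s f g h z)%E.
Proof.
by move=> lb; apply: le_ereal_inf_tmp => _ [xy feas <-]; rewrite lee_fin; exact: lb.
Qed.

Lemma phi_MPopt z xy : MPopt s f g h z xy -> phi s f g h z = (h xy.1 xy.2)%:E.
Proof.
move=> [feas opt]; apply/eqP; rewrite eq_le phi_le_feas //=.
exact: phi_ge_lbound.
Qed.

Lemma BPopt_le_phi xyb z :
  BPopt s f g h xyb -> WMinZ z -> ((h xyb.1 xyb.2)%:E <= phi s f g h z)%E.
Proof.
move=> [_ opt] z_min; apply: phi_ge_lbound => xy feas.
by apply: opt; exact: MPfeas_BPfeas z_min feas.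
Qed.

Lemma OPopt_MPopt_BPopt zb xyb :
  OPopt s f g h M zb -> MPopt s f g h zb xyb -> BPopt s f g h xyb.
Proof.
move=> [zb_min zb_opt] xyb_opt; split; first exact: MPfeas_BPfeas zb_min xyb_opt.1.
move=> xy feas; rewrite -lee_fin -(phi_MPopt xyb_opt).
apply: le_trans (zb_opt _ (BPfeas_WMin feas)) _.
exact/phi_le_feas/BPfeas_MPfeas.
Qed.

Lemma BPopt_phi xyb : BPopt s f g h xyb -> phi s f g h (f xyb.1) = (h xyb.1 xyb.2)%:E.
Proof.
move=> xyb_opt; have feas := xyb_opt.1.
apply/eqP; rewrite eq_le phi_le_feas /=; last exact: BPfeas_MPfeas.
exact/BPopt_le_phi/BPfeas_WMin.
Qed.

Lemma BPopt_OPopt xyb : BPopt s f g h xyb -> OPopt s f g h M (f xyb.1).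
Proof.
move=> xyb_opt; split; first exact: BPfeas_WMin xyb_opt.1.
by move=> z z_min; rewrite BPopt_phi //; exact: BPopt_le_phi.
Qed.

(* The optimal values coincide: both infima range over the same values of h. *)
Lemma BPval_OPval : BPval s f g h = OPval s f g h M.
Proof.
apply/eqP; rewrite eq_le; apply/andP; split.
  apply: le_ereal_inf_tmp => _ [z z_min <-].
  apply: le_ereal_inf_tmp => _ [xy feas <-].
  by apply: ereal_inf_lbound; exists xy => //; exact: MPfeas_BPfeas feas.
apply: le_ereal_inf_tmp => _ [xy feas <-].
apply: le_trans (phi_le_feas (BPfeas_MPfeas feas)).
by apply: ereal_inf_lbound; exists (f xy.1) => //; exact: BPfeas_WMin.
Qed.

End BP_OP.

Theorem proposition3p2 (R : realType) (n m p q l : nat)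
  (s : 'rV[R]_n -> 'rV[R]_q) (f : 'rV[R]_n -> 'rV[R]_p)
  (g : 'rV[R]_n -> 'rV[R]_m -> 'rV[R]_l) (h : 'rV[R]_n -> 'rV[R]_m -> R)
  (M : 'rV[R]_p)
  (* X nonempty, bounded, convex *)
  (HXne : exists x, Xset s x)
  (HXbd : exists r : R, forall x, Xset s x -> `|x| <= r)
  (HXcvx : forall x x' (t : R), Xset s x -> Xset s x' -> 0 <= t <= 1 ->
             Xset s (t *: x + (1 - t) *: x'))
  (* s continuously differentiable with quasiconvex components *)
  (Hs1 : cont_diff s) (Hsq : forall i, quasiconvex (vcomp s i))
  (* f continuously differentiable with pseudoconvex components *)
  (Hf1 : cont_diff f) (Hfp : forall i, pseudoconvex (vcomp f i))
  (* g continuously differentiable with quasiconvex components *)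
  (Hg1 : cont_diff (fun xy : 'rV[R]_n * 'rV[R]_m => g xy.1 xy.2))
  (Hgq : forall i, quasiconvex (vcomp (fun xy : 'rV[R]_n * 'rV[R]_m => g xy.1 xy.2) i))
  (* h continuous and pseudoconvex *)
  (Hhc : continuous (fun xy : 'rV[R]_n * 'rV[R]_m => h xy.1 xy.2))
  (Hhp : pseudoconvex (fun xy : 'rV[R]_n * 'rV[R]_m => h xy.1 xy.2))
  (* M bounds f on X *)
  (HM : forall x, Xset s x -> vle (f x) M) :
  (* (a) *)
  (forall zb xyb, OPopt s f g h M zb -> MPopt s f g h zb xyb -> BPopt s f g h xyb) /\
  (* (b) *)
  (forall xyb, BPopt s f g h xyb ->
     OPopt s f g h M (f xyb.1) /\ phi s f g h (f xyb.1) = (h xyb.1 xyb.2)%:E) /\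
  (* optimal values coincide *)
  BPval s f g h = OPval s f g h M.
Proof.
split; first exact: (OPopt_MPopt_BPopt HM).
split; last exact: (BPval_OPval g h HM).
move=> xyb xyb_opt; split; first exact: (BPopt_OPopt HM).
exact: (BPopt_phi HM).
Qed.
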